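(* Fix $w$ in the single-component setting, and suppose $\sigma\le1$. Then $L(w)\ge0.25\,p(0)\int_0^\infty\exp\big((|s(0)|-1)\delta-\frac\rho2\delta^2\big)\,d\delta$.
   Context: Single-component setting: $y$ uniform on $\{\pm1\}$; $x=(x_1,x_2)$, $x_1\in\mathbb{R}^{d_1}$, $x_2\sim\mathcal{N}(0,\Sigma_2)$ with $\Sigma_2\succ0$ independent of $x_1$. $\ell_{exp}(t)=\exp(-|t|)$, $L(w)=\mathbb{E}[\ell_{exp}(w^\top x)]$. For fixed $w=(w_1,w_2)$: $\sigma=\sqrt{w_2^\top\Sigma_2w_2}$; $p$ is the density of $\mu=w_1^\top x_1$, assumed such that $\log p$ is differentiable, $\nu$-strongly concave and $\rho$-smooth (i.e. $-\rho\le(\log p)''\le-\nu$) for some $0<\nu\le\rho$; $s(\mu)=\frac{p'(\mu)}{p(\mu)}$. Then $L(w)=\mathbb{E}_\mu[g_\sigma(\mu)]$ with $g_\sigma(\mu)=\mathbb{E}_{Z\sim\mathcal{N}(0,1)}[\ell_{exp}(\mu+\sigma Z)]$. *)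

From HB Require Import structures.
From mathcomp Require Import all_boot all_order all_algebra.
From mathcomp Require Import all_classical all_reals all_analysis.
Set Implicit Arguments. Unset Strict Implicit. Unset Printing Implicit Defensive.
Import Order.TTheory GRing.Theory Num.Theory.
Import numFieldNormedType.Exports.
Local Open Scope classical_set_scope.
Local Open Scope ring_scope.

Definition lexp {R : realType} (t : R) : R := expR (- `|t|).

(* g_sigma(mu) = E_{Z ~ N(0,1)} [ l_exp(mu + sigma Z) ]  (extended-real valued,
   nonnegative integrand so always well defined) *)
Definition g_sigma {R : realType} (sigma mu : R) : \bar R :=
  (\int[@lebesgue_measure R]_z (normal_pdf 0 1 z * lexp (mu + sigma * z))%:E)%E.

(* L(w) = E_mu [ g_sigma(mu) ] where mu = w1^T x1 has Lebesgue density p *)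
Definition Lw {R : realType} (p : R -> R) (sigma : R) : \bar R :=
  (\int[@lebesgue_measure R]_mu ((p mu)%:E * g_sigma sigma mu))%E.

Definition score {R : realType} (p : R -> R) (mu : R) : R :=
  (derive1 p mu) / p mu.

(* Three independent estimates are combined.
   1. Gaussian weight: for |sigma| <= 1, |mu + sigma z| <= |mu| + |z|, hence
      g_sigma(mu) >= exp(-|mu|) E[exp(-|Z|)] >= exp(-|mu|)/4; the constant
      E[exp(-|Z|)] >= 1/4 is certified by a three-step staircase minorant of
      phi(z) exp(-|z|), using phi >= exp(-z^2/2)/3 and exp(-t) >= (1 - t/4)^4.
      Consequently L(w) >= (1/4) \int p(mu) exp(-|mu|) dmu.
   2. Log-concavity: (log p)'' >= -rho gives, by a second-order Taylor argument
      (mean value theorem applied to (log p)' + rho mu and to log p minus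
      its osculating parabola), p(mu) >= p(0) exp(s(0) mu - rho/2 mu^2).
   3. Half-line: the integrand p(0)/4 exp(s(0) mu - rho/2 mu^2 - |mu|) is
      nonnegative, and on the half-line where s(0) mu = |s(0)| |mu| it equals
      the integrand of the claimed bound; the integral over that half-line is at
      most the integral over R (using the reflection mu -> -mu when s(0) < 0). *)

From HB Require Import structures.
From mathcomp Require Import all_boot all_order all_algebra.
From mathcomp Require Import all_classical all_reals all_analysis.
From mathcomp Require Import ring lra measurable_realfun.
Import Order.TTheory GRing.Theory Num.Theory.
Import numFieldNormedType.Exports.
Local Open Scope classical_set_scope.
Local Open Scope ring_scope.

Section nonneg_integral.
Context d (T : measurableType d) (R : realType) (mu : {measure set T -> \bar R}).

(* Integrals of nonnegative functions are monotone, with no measurability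
   assumption: both sides are suprema of integrals of simple minorants. *)
Lemma ge0_le_integralT (f g : T -> \bar R) :
  (forall x, 0 <= f x)%E -> (forall x, f x <= g x)%E ->
  (\int[mu]_x f x <= \int[mu]_x g x)%E.
Proof.
move=> f0 fg.
have g0 x : (0 <= g x)%E by exact: le_trans (f0 x) (fg x).
rewrite !ge0_integralTE//; apply: ereal_sup_le => _ [h /= hf <-].
by exists h => //= x; exact: le_trans (hf x) (fg x).
Qed.

End nonneg_integral.

Section half_line.
Context {R : realType}.
Local Notation mu := (@lebesgue_measure R).

Lemma half_line_integral_le (H : R -> R) (e : R) :
  continuous H -> (forall x, 0 <= H x) -> `|e| = 1 ->
  (\int[mu]_(x in `[0%R, +oo[%classic) (H (e * x))%:E <= \int[mu]_x (H x)%:E)%E.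
Proof.
move=> Hc H0 /eqP; rewrite eqr_norml ler01 andbT.
have mH : measurable_fun [set: R] (fun x => (H x)%:E).
  by apply/measurable_EFinP; exact: continuous_measurable_fun.
have H0E x : setT x -> (0 <= (H x)%:E)%E by rewrite lee_fin.
case/orP => /eqP->.
  under eq_integral do rewrite mul1r.
  exact: ge0_subset_integral.
under eq_integral do rewrite mulN1r.
have := @ge0_integration_by_substitutionNy R H 0; rewrite oppr0 => <- //.
- exact: ge0_subset_integral.
- exact: continuous_subspaceT.
Qed.

Lemma continuous_expR_quadratic (b r : R) :
  continuous (fun m : R => expR (b * m - r * m ^+ 2)).
Proof.
move=> x; apply: continuous_comp; last exact: continuous_expR.
apply: cvgB; first by apply: cvgM; [exact: cvg_cst | exact: cvg_id].
by apply: cvgM; [exact: cvg_cst | exact: exprn_continuous].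
Qed.

Lemma continuous_expR_quadratic_abs (b r : R) :
  continuous (fun m : R => expR (b * m - r * m ^+ 2 - `|m|)).
Proof.
move=> x; apply: continuous_comp; last exact: continuous_expR.
apply: cvgB; last exact: norm_continuous.
apply: cvgB; first by apply: cvgM; [exact: cvg_cst | exact: cvg_id].
by apply: cvgM; [exact: cvg_cst | exact: exprn_continuous].
Qed.

(* The integrand of the claimed bound is exp(b m - r m^2 - |m|) restricted to
   the half-line on which b m = |b| |m|; hence the comparison of integrals. *)
Lemma half_line_laplace_le (b r : R) :
  (\int[mu]_(d in `[0%R, +oo[%classic) (expR ((`|b| - 1) * d - r * d ^+ 2))%:E
    <= \int[mu]_m (expR (b * m - r * m ^+ 2 - `|m|))%:E)%E.
Proof.
have [e e1 eb] : exists2 e : R, `|e| = 1 & e * b = `|b|.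
  have [b_ge0|b_lt0] := lerP 0 b.
    by exists 1; rewrite ?normr1 ?mul1r ?ger0_norm.
  by exists (-1); rewrite ?normrN ?normr1 ?mulN1r ?ltr0_norm.
have e2 : e ^+ 2 = 1 by rewrite -real_normK ?num_real // e1 expr1n.
apply: le_trans (half_line_integral_le _ e (continuous_expR_quadratic_abs b r)
  (fun m => expR_ge0 _) e1).
rewrite le_eqVlt; apply/predU1P; left.
apply: eq_integral => d /[!inE] /= /[!in_itv] /= /andP[d0 _]; congr (expR _)%:E.
by rewrite (normrM e d) e1 mul1r (ger0_norm d0) exprMn e2 mul1r -eb; ring.
Qed.

End half_line.

Section gaussian_laplace_weight.
Context {R : realType}.
Local Notation mu := (@lebesgue_measure R).

(* The weight z |-> phi(z) exp(-|z|), phi the standard normal density; its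
   integral is E[exp(-|Z|)] for Z ~ N(0,1), which is about 0.52 > 1/4. *)
Definition gauss_laplace (z : R) : R := normal_pdf 0 1 z * expR (- `|z|).

Lemma gauss_laplace_ge0 (z : R) : 0 <= gauss_laplace z.
Proof. by rewrite mulr_ge0 ?normal_pdf_ge0 ?expR_ge0. Qed.

Lemma measurable_gauss_laplace : measurable_fun setT (EFin \o gauss_laplace).
Proof.
apply/measurable_EFinP; apply: measurable_funM; first exact: measurable_normal_pdf.
apply: continuous_measurable_fun => x.
exact/continuous_comp/continuous_expR/continuousN/norm_continuous.
Qed.

(* The peak 1/sqrt(2 pi) of the standard normal density exceeds 1/3, as pi < 4. *)
Lemma normal_peak1_ge : 1 / 3 <= normal_peak (1 : R).
Proof.
rewrite /normal_peak expr1n mul1r; set s := Num.sqrt _.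
have pi4 : pi < 4 :> R by have := @pihalf_lt2 R; lra.
have pi2_gt0 : 0 < 1 * pi *+ 2 :> R by rewrite mul1r mulrn_wgt0 // pi_gt0.
have s_gt0 : 0 < s by rewrite sqrtr_gt0.
have s2 : s ^+ 2 < 9 by rewrite sqr_sqrtr ?ltW // mul1r mulr2n; lra.
have sVs : s^-1 * s = 1 by rewrite mulVf // gt_eqF.
have sV_gt0 : 0 < s^-1 by rewrite invr_gt0.
nra.
Qed.

(* A polynomial lower bound for exp(-t): exp(-t) = exp(-t/4)^4 >= (1 - t/4)^4. *)
Lemma expR_ge_pow4 (t : R) : t <= 4 -> (1 - t / 4) ^+ 4 <= expR (- t).
Proof.
move=> t4; have -> : - t = 4%:R * (- t / 4) by lra.
rewrite expRM_natl; apply: lerXn2r; rewrite ?nnegrE ?expR_ge0 //; first lra.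
by have := expR_ge1Dx (- t / 4); rewrite mulNr.
Qed.

(* On the band |z| <= b the weight is at least band_const b, since there
   phi(z) exp(-|z|) >= exp(-(b^2/2 + b)) / 3. *)
Definition band_const (b : R) : R := (1 - (b ^+ 2 / 2 + b) / 4) ^+ 4 / 3.

Lemma band_const_le (b z : R) : b ^+ 2 / 2 + b <= 4 -> `|z| <= b ->
  band_const b <= gauss_laplace z.
Proof.
move=> b4 zb; rewrite /gauss_laplace normal_pdfE ?oner_neq0 // /normal_fun.
rewrite subr0 expr1n /band_const; set c := (1 - _ / 4) ^+ 4.
have c0 : 0 <= c by rewrite exprn_even_ge0.
have z0 := normr_ge0 z.
have z2 : z ^+ 2 = `|z| ^+ 2 by rewrite real_normK ?num_real.
have c_le : c <= expR (- z ^+ 2 / 2) * expR (- `|z|).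
  rewrite -expRD; apply: le_trans (expR_ge_pow4 _ b4) _.
  rewrite ler_expR z2; nra.
have := normal_peak1_ge; have := expR_ge0 (- z ^+ 2 / 2).
have := expR_ge0 (- `|z|); nra.
Qed.

Lemma band_const_values : [/\ 0 <= band_const (3/4),
  band_const (3/4) <= band_const (1/2), band_const (1/2) <= band_const (1/4)
  & 1/4 <= (band_const (1/4) + band_const (1/2) + band_const (3/4)) / 2].
Proof. rewrite /band_const !exprS !expr0; split; lra. Qed.

(* A staircase minorant of the weight, built from the bands of half-widths
   1/4, 1/2 and 3/4; its integral is the last quantity of band_const_values. *)
Definition gauss_laplace_step (z : R) : R :=
  band_const (3/4) * \1_(`[- (3/4), 3/4]%classic) z
  + (band_const (1/2) - band_const (3/4)) * \1_(`[- (1/2), 1/2]%classic) z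
  + (band_const (1/4) - band_const (1/2)) * \1_(`[- (1/4), 1/4]%classic) z.

Lemma indic_centered (a z : R) :
  \1_(`[- a, a]%classic) z = ((`|z| <= a)%R%:R : R).
Proof. by rewrite indicE mem_setE in_itv /= ler_norml. Qed.

(* On each band the staircase stays below band_const of that band. *)
Lemma gauss_laplace_step_le (z : R) : 0 <= gauss_laplace_step z <= gauss_laplace z.
Proof.
have [c0 c1 c2 _] := band_const_values.
have w0 := gauss_laplace_ge0 z.
rewrite /gauss_laplace_step !indic_centered.
case: (lerP `|z| (1/4)) => z1; case: (lerP `|z| (1/2)) => z2;
  case: (lerP `|z| (3/4)) => z3; rewrite ?mulr1 ?mulr0 ?addr0 ?add0r.
all: try (exfalso; lra).
- by have := band_const_le (1/4) z ltac:(rewrite expr2; lra) z1; lra.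
- by have := band_const_le (1/2) z ltac:(rewrite expr2; lra) z2; lra.
- by have := band_const_le (3/4) z ltac:(rewrite expr2; lra) z3; lra.
- by rewrite lexx.
Qed.

Lemma measurable_scaled_indic (a c : R) :
  measurable_fun setT (fun z => (c * \1_(`[- a, a]%classic) z)%:E).
Proof. by apply/measurable_EFinP/measurable_funM => //; exact: measurable_indic. Qed.

Lemma integral_scaled_indic (a c : R) : 0 < a -> 0 <= c ->
  (\int[mu]_z (c * \1_(`[- a, a]%classic) z)%:E = (c * (a *+ 2))%:E)%E.
Proof.
move=> a0 c0; under eq_integral do rewrite EFinM.
rewrite ge0_integralZl_EFin //; last first.
  by apply/measurable_EFinP; exact: measurable_indic.
rewrite integral_indic // setIT mulr2n EFinM; congr (_ * _)%E.
apply: etrans (lebesgue_measure_itv `[- a, a]) _.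
rewrite /= lte_fin ifT; last lra.
by rewrite -EFinB opprK.
Qed.

Lemma gauss_laplace_integral_ge :
  ((1/4)%:E <= \int[mu]_z (gauss_laplace z)%:E)%E.
Proof.
have [c0 c1 c2 c3] := band_const_values.
have c1' : 0 <= band_const (1/2) - band_const (3/4) by lra.
have c2' : 0 <= band_const (1/4) - band_const (1/2) by lra.
have scaled_ge0 (a c : R) : 0 <= c -> forall z : R, setT z ->
    (0 <= (c * \1_(`[- a, a]%classic) z)%:E)%E.
  by move=> c_ge0 z _; rewrite lee_fin mulr_ge0 ?indic_ge0.
apply: (@le_trans _ _ (\int[mu]_z (gauss_laplace_step z)%:E)%E); last first.
  apply: ge0_le_integralT => z; have /andP[step0 step_le] := gauss_laplace_step_le z;
    by rewrite lee_fin.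
rewrite /gauss_laplace_step.
under eq_integral do rewrite EFinD.
rewrite ge0_integralD //; last 4 first.
- by move=> z _; rewrite lee_fin; apply: addr_ge0; apply: mulr_ge0; rewrite ?indic_ge0.
- apply/measurable_EFinP/measurable_funD; apply/measurable_EFinP;
    exact: measurable_scaled_indic.
- exact: scaled_ge0.
- exact: measurable_scaled_indic.
under eq_integral do rewrite EFinD.
rewrite ge0_integralD //; try exact: scaled_ge0; try exact: measurable_scaled_indic.
rewrite !integral_scaled_indic ?divr_gt0 ?ltr0n // -!EFinD lee_fin; lra.
Qed.

(* For |s| <= 1, g_s(m) >= exp(-|m|)/4: bound exp(-|m + s z|) >= exp(-|m|) exp(-|z|)
   under the normal integral, then use gauss_laplace_integral_ge. *)
Lemma g_sigma_ge (s m : R) : `|s| <= 1 -> ((expR (- `|m|) / 4)%:E <= g_sigma s m)%E.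
Proof.
move=> s1; have em0 := expR_ge0 (- `|m|).
apply: (@le_trans _ _ ((expR (- `|m|))%:E * (1/4)%:E)%E).
  by rewrite -EFinM lee_fin mulrA mulr1.
apply: (@le_trans _ _ ((expR (- `|m|))%:E * \int[mu]_z (gauss_laplace z)%:E)%E).
  by rewrite lee_wpmul2l ?lee_fin ?gauss_laplace_integral_ge.
rewrite -ge0_integralZl_EFin //; last 2 first.
- by move=> z _; rewrite lee_fin gauss_laplace_ge0.
- exact: measurable_gauss_laplace.
rewrite /g_sigma; apply: ge0_le_integralT => z.
  by rewrite lee_fin mulr_ge0 ?gauss_laplace_ge0.
rewrite lee_fin /gauss_laplace /lexp mulrCA ler_wpM2l ?normal_pdf_ge0 //.
rewrite -expRD ler_expR.
have := ler_normD m (s * z); rewrite normrM.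
have := normr_ge0 z; have := normr_ge0 s; nra.
Qed.

Lemma Lw_ge {p : R -> R} {s : R} :
  (forall x, 0 <= p x) -> `|s| <= 1 ->
  (\int[mu]_m (p m * expR (- `|m|) / 4)%:E <= Lw p s)%E.
Proof.
move=> p_ge0 s1; apply: ge0_le_integralT => m.
  by rewrite lee_fin !mulr_ge0 ?expR_ge0.
by rewrite -mulrA EFinM lee_wpmul2l ?lee_fin ?g_sigma_ge.
Qed.

End gaussian_laplace_weight.

Section log_concave_density.
Context {R : realType}.

Lemma ge0_derive_le {f df : R -> R} {a b : R} :
  (forall x : R, is_derive x (1:R) f (df x)) ->
  (forall x, a <= x <= b -> 0 <= df x) -> a <= b -> f a <= f b.
Proof.
move=> hd hdf; rewrite le_eqVlt => /predU1P[->//|ab]; rewrite -subr_ge0.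
have [c /[!in_itv]/= /andP[ac cb] ->] := MVT ab (fun x _ => hd x)
  (derivable_within_continuous (fun x _ => @ex_derive _ _ _ _ _ _ _ (hd x))).
by apply: mulr_ge0; [apply: hdf; rewrite !ltW | rewrite subr_ge0 ltW].
Qed.

Lemma quadratic_minorant (F : R -> R) (rho a x : R) :
  (forall t, derivable F t 1) -> (forall t, derivable (derive1 F) t 1) ->
  (forall t, - rho <= derive1 (derive1 F) t) ->
  F a + derive1 F a * (x - a) - rho / 2 * (x - a) ^+ 2 <= F x.
Proof.
move=> dF dF' F''ge.
have DF (t : R) : is_derive t (1:R) F (derive1 F t).
  by rewrite derive1E; exact: derivableP.
have DF' (t : R) : is_derive t (1:R) (derive1 F) (derive1 (derive1 F) t).
  by rewrite derive1E; exact: derivableP.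
(* F' + rho id is nondecreasing, its derivative F'' + rho being nonnegative *)
pose psi := derive1 F + rho \*: (@id R).
have psi_ndecr u v : u <= v -> psi u <= psi v.
  apply: (@ge0_derive_le _ (fun t => derive1 (derive1 F) t + rho *: 1)) => t _.
  by have := F''ge t; rewrite /GRing.scale/= mulr1; lra.
(* phi = F minus the parabola vanishes at a and phi' = psi - psi a changes sign
   there from nonpositive to nonnegative, so phi >= phi a = 0 *)
pose phi := F - cst (F a) - derive1 F a \*: (@id R - cst a)
  + (rho / 2) \*: (@id R - cst a) ^+ 2.
have Dphi (t : R) : is_derive t (1:R) phi (psi t - psi a).
  apply: is_derive_eq; rewrite /psi /= !fctE /GRing.scale /= /GRing.scale /=.
  by rewrite expr1 !subr0 !mulr1; field.
have phiE t : phi t = F t - F a - derive1 F a * (t - a) + rho / 2 * (t - a) ^+ 2.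
  by rewrite /phi /= !fctE.
suff : phi a <= phi x by rewrite !phiE !subrr expr0n /= !mulr0; lra.
have [ax|xa] := leP a x.
  by apply: (ge0_derive_le Dphi) => // t /andP[a_t _]; rewrite subr_ge0 psi_ndecr.
have DNphi (t : R) : is_derive t (1:R) (- phi) (- (psi t - psi a)) by exact: is_deriveN.
have : (- phi) x <= (- phi) a.
  apply: (ge0_derive_le DNphi) (ltW xa) => t /andP[_ ta].
  by rewrite oppr_ge0 subr_le0 psi_ndecr.
by rewrite /= lerN2.
Qed.

Lemma score_log_derive (p : R -> R) (x : R) :
  (forall y, 0 < p y) -> derivable ((@ln R) \o p) x 1 ->
  score p x = derive1 ((@ln R) \o p) x.
Proof.
move=> p_gt0 dlnp.
have pE : p = expR \o ((@ln R) \o p) by apply/funext => y /=; rewrite lnK ?posrE.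
have Dlnp : is_derive x (1:R) ((@ln R) \o p) (derive1 ((@ln R) \o p) x).
  by rewrite derive1E; exact: derivableP.
have Dp : is_derive x (1:R) p (expR (ln (p x)) * derive1 ((@ln R) \o p) x).
  by rewrite [X in is_derive _ _ X _]pE; exact: is_derive1_comp.
by rewrite /score derive1E derive_val lnK ?posrE // mulrC mulKf ?gt_eqF.
Qed.

Lemma density_ge_gaussian (p : R -> R) (rho a x : R) :
  (forall y, 0 < p y) ->
  (forall y, derivable ((@ln R) \o p) y 1) ->
  (forall y, derivable (derive1 ((@ln R) \o p)) y 1) ->
  (forall y, - rho <= derive1 (derive1 ((@ln R) \o p)) y) ->
  p a * expR (score p a * (x - a) - rho / 2 * (x - a) ^+ 2) <= p x.
Proof.
move=> p_gt0 d1 d2 d2_ge.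
have := quadratic_minorant _ rho a x d1 d2 d2_ge.
rewrite -score_log_derive //= => lnp_ge.
rewrite -[p x]lnK ?posrE // -[p a]lnK ?posrE // -expRD ler_expR; lra.
Qed.

End log_concave_density.

Theorem claim3 (R : realType) (p : R -> R) (sigma nu rho : R)
  (* p is a probability density of mu = w1^T x1 (positive, so log p is defined) *)
  (hp_pos : forall x, 0 < p x)
  (hp_int : (\int[@lebesgue_measure R]_x (p x)%:E = 1)%E)
  (* log p twice differentiable with -rho <= (log p)'' <= -nu, 0 < nu <= rho *)
  (hnu : 0 < nu) (hnurho : nu <= rho)
  (hd1 : forall x, derivable ((@ln R) \o p) x 1)
  (hd2 : forall x, derivable (derive1 ((@ln R) \o p)) x 1)
  (hconc : forall x, - rho <= derive1 (derive1 ((@ln R) \o p)) x <= - nu)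
  (* sigma = sqrt(w2^T Sigma2 w2) >= 0, and sigma <= 1 *)
  (hsig0 : 0 <= sigma) (hsig1 : sigma <= 1) :
  (Lw p sigma >=
     ((1/4) * p 0)%:E *
     \int[@lebesgue_measure R]_(d in `[0%R, +oo[%classic)
        (expR ((`|score p 0| - 1) * d - rho / 2 * d ^+ 2))%:E)%E.
Proof.
set s0 := score p 0.
have sigma1 : `|sigma| <= 1 by rewrite ger0_norm.
have p_ge m : p 0 * expR (s0 * m - rho / 2 * m ^+ 2) <= p m.
  have := density_ge_gaussian p rho 0 m hp_pos hd1 hd2 (fun y => proj1 (andP (hconc y))).
  by rewrite !subr0.
apply: le_trans (Lw_ge (fun x => ltW (hp_pos x)) sigma1).
have c0 : 0 <= 1 / 4 * p 0 by rewrite mulr_ge0 ?ltW.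
apply: le_trans (lee_wpmul2l _ (half_line_laplace_le s0 (rho / 2))) _.
  by rewrite lee_fin.
rewrite -ge0_integralZl_EFin //; last first.
  apply/measurable_EFinP; apply: continuous_measurable_fun.
  exact: continuous_expR_quadratic_abs.
apply: ge0_le_integralT => m; rewrite lee_fin; first by rewrite mulr_ge0 ?expR_ge0.
rewrite [X in _ * X]expRD; have := p_ge m; have := expR_ge0 (- `|m|).
have := expR_ge0 (s0 * m - rho / 2 * m ^+ 2); nra.
Qed.
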